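(* Let $a,b$ be positive integers with $\gcd(a,b)=1$, let $r\ge1$, let $n>rab$, and let $\lambda$ be an $(a,b;n)$-balanced partition of $rn$. Let $k$ be an integer with $rab\le k\le n-1$ such that $k=rab+au+bv$ for some nonnegative integers $u,v$, and let $S_k=\{(i,j)\in\lambda: ai+bj\equiv k\pmod n\}$. Then $S_k$ is the disjoint union of two sets $A_k$ and $B_k$ such that: (1) if $(i,j)\in A_k$ then either $i<b$ or $(i-b,j+a)\in A_k$; (2) if $(i,j)\in B_k$ then either $j<a$ or $(i+b,j-a)\in B_k$.
   Context: Partitions are Young diagrams: finite sets $\lambda\subset\mathbb{Z}_{\ge0}^2$ such that $(i,j)\in\lambda$ implies $(i',j')\in\lambda$ for $0\le i'\le i$, $0\le j'\le j$. Box $(i,j)$ has color $ai+bj\bmod n$; $\lambda$ is $(a,b;n)$-balanced if each residue class mod $n$ is the color of exactly $r$ boxes of $\lambda$. *)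

From mathcomp Require Import all_boot.
From mathcomp Require Import finmap.
Set Implicit Arguments. Unset Strict Implicit. Unset Printing Implicit Defensive.
Local Open Scope fset_scope.

Definition is_partition (lam : {fset (nat * nat)}) : Prop :=
  forall i j i' j', (i, j) \in lam -> i' <= i -> j' <= j -> (i', j') \in lam.

Definition color (a b n : nat) (p : nat * nat) : nat := (a * p.1 + b * p.2) %% n.

Definition balanced (a b n r : nat) (lam : {fset (nat * nat)}) : Prop :=
  forall c, c < n -> #|` [fset p in lam | color a b n p == c] | = r.

Definition Sk (a b n k : nat) (lam : {fset (nat * nat)}) : {fset (nat * nat)} :=
  [fset p in lam | a * p.1 + b * p.2 == k %[mod n]].

From mathcomp Require Import all_boot finmap zify.
Local Open Scope fset_scope.
Local Open Scope nat_scope.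

(* Both rays through a box, {(i - t b, j + t a)} to the left and
   {(i + t b, j - t a)} to the right, stay in the color class S_k, so it is
   enough to show that every box of S_k has one of its two rays inside lam:
   A collects the boxes with a full left ray, B the others.  Moving the boxes
   of S_k with i >= b left by b, and the last boxes of right rays down by a,
   injects both families disjointly into S_(k-ab), which again has r boxes;
   hence there are at most as many ray ends as boxes of S_k with i < b.  Such
   a box cannot have its whole right ray in lam: by coprimality the ray would
   dominate every lattice point of the line ax + by = k, and the shape of k
   puts r + 1 of them in S_k.  So every box with i < b owns a distinct ray
   end, and a box with neither ray in lam would own one more. *)

Lemma round_up_to_residue {b i : nat} x : i < b -> exists t d, d < b /\ x + d = i + t * b.
Proof.
move=> ib; have b_gt0 : 0 < b by lia.
have := divn_eq x b; have := ltn_pmod x b_gt0.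
case: (leqP (x %% b) i) => [le_xi | lt_ix] lt_xb x_eq.
- by exists (x %/ b), (i - x %% b); lia.
- by exists (x %/ b).+1, (i + b - x %% b); rewrite mulSn; lia.
Qed.

Lemma modn_eq_or_ge {N n k : nat} : N %% n = k -> N = k \/ k + n <= N.
Proof.
move=> N_mod; have := divn_eq N n; rewrite N_mod.
by case: (N %/ n) => [|q] ->; [left | right; rewrite mulSn]; lia.
Qed.

Lemma in_fset_sep {T : choiceType} (A : {fset T}) (P : pred T) x :
  (x \in [fset y in A | P y]) = (x \in A) && P x.
Proof. by rewrite inE. Qed.

Section Diagram.
Local Set Implicit Arguments.
Local Unset Strict Implicit.

Variables (a b : nat) (lam : {fset (nat * nat)}).

Definition shiftR t (p : nat * nat) := (p.1 + t * b, p.2 - t * a).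
Definition shiftL t (p : nat * nat) := (p.1 - t * b, p.2 + t * a).

Definition right_ray_in p :=
  [forall t : 'I_p.2.+1, (t * a <= p.2) ==> (shiftR t p \in lam)].
Definition left_ray_in p :=
  [forall t : 'I_p.1.+1, (t * b <= p.1) ==> (shiftL t p \in lam)].

Lemma shiftR0 p : shiftR 0 p = p.
Proof. by case: p => i j; rewrite /shiftR !mul0n addn0 subn0. Qed.

Lemma shiftR_add s t p : shiftR s (shiftR t p) = shiftR (t + s) p.
Proof. by rewrite /shiftR /= mulnDl; congr pair; lia. Qed.

Lemma shiftL_add s t p : shiftL s (shiftL t p) = shiftL (t + s) p.
Proof. by rewrite /shiftL /= mulnDl; congr pair; lia. Qed.

Lemma shiftRK t p : t * a <= p.2 -> shiftL t (shiftR t p) = p.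
Proof. by case: p => i j /= ta; rewrite /shiftL /shiftR /= addnK subnK. Qed.

Lemma weight_shiftR t p : t * a <= p.2 ->
  a * (shiftR t p).1 + b * (shiftR t p).2 = a * p.1 + b * p.2.
Proof. by case: p => i j /= ta; rewrite mulnBr mulnDr; nia. Qed.

Lemma weight_shiftL t p : t * b <= p.1 ->
  a * (shiftL t p).1 + b * (shiftL t p).2 = a * p.1 + b * p.2.
Proof. by case: p => i j /= tb; rewrite mulnBr mulnDr; nia. Qed.

Hypotheses (a_gt0 : 0 < a) (b_gt0 : 0 < b).

Lemma right_ray_inP p :
  reflect (forall t, t * a <= p.2 -> shiftR t p \in lam) (right_ray_in p).
Proof.
apply: (iffP forallP) => [ray t ta | ray t]; last exact/implyP/ray.
have t_lt : t < p.2.+1 by nia.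
by have := ray (Ordinal t_lt); rewrite /= ta.
Qed.

Lemma left_ray_inP p :
  reflect (forall t, t * b <= p.1 -> shiftL t p \in lam) (left_ray_in p).
Proof.
apply: (iffP forallP) => [ray t tb | ray t]; last exact/implyP/ray.
have t_lt : t < p.1.+1 by nia.
by have := ray (Ordinal t_lt); rewrite /= tb.
Qed.

Lemma right_ray_inPn p :
  reflect (exists2 t, t * a <= p.2 & shiftR t p \notin lam) (~~ right_ray_in p).
Proof.
apply: (iffP forallPn) => [[t] | [t ta tn]].
  by rewrite negb_imply => /andP[]; exists t.
have t_lt : t < p.2.+1 by nia.
by exists (Ordinal t_lt); rewrite negb_imply ta.
Qed.

Lemma left_ray_inPn p :
  reflect (exists2 t, t * b <= p.1 & shiftL t p \notin lam) (~~ left_ray_in p).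
Proof.
apply: (iffP forallPn) => [[t] | [t tb tn]].
  by rewrite negb_imply => /andP[]; exists t.
have t_lt : t < p.1.+1 by nia.
by exists (Ordinal t_lt); rewrite negb_imply tb.
Qed.

Lemma right_ray_exit p : p \in lam -> ~~ right_ray_in p ->
  exists s, [/\ s.+1 * a <= p.2, shiftR s.+1 p \notin lam &
                forall w, w <= s -> shiftR w p \in lam].
Proof.
move=> pl /right_ray_inPn nray.
pose exits t := (t * a <= p.2) && (shiftR t p \notin lam).
have : exists t, exits t by case: nray => t ta tn; exists t; apply/andP.
case/ex_minnP => -[|s] /andP[sa sn] s_min; first by rewrite shiftR0 pl in sn.
exists s; split=> // w ws; apply/negPn/negP => wn.
have : s.+1 <= w.
  by apply: s_min; rewrite /exits wn andbT (leq_trans _ sa) // leq_mul2r ltnW ?orbT.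
by rewrite ltnNge ws.
Qed.

Lemma right_ray_in_shiftR p : a <= p.2 -> right_ray_in p -> right_ray_in (shiftR 1 p).
Proof.
move=> ap /right_ray_inP ray; apply/right_ray_inP => t ta.
by rewrite shiftR_add; apply: ray; move: ta; rewrite /= mulnDl; lia.
Qed.

Lemma left_ray_in_shiftL p : b <= p.1 -> left_ray_in p -> left_ray_in (shiftL 1 p).
Proof.
move=> bp /left_ray_inP ray; apply/left_ray_inP => t tb.
by rewrite shiftL_add; apply: ray; move: tb; rewrite /= mulnDl; lia.
Qed.

Lemma left_ray_in_shiftR p : a <= p.2 -> left_ray_in (shiftR 1 p) -> left_ray_in p.
Proof.
move=> ap /left_ray_inP ray; apply/left_ray_inP => t tb.
rewrite -[p in shiftL t p](@shiftRK 1) ?mul1n // shiftL_add; apply: ray.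
by move: tb; rewrite /= mulnDl; lia.
Qed.

Definition strip_base q := shiftL (q.1 %/ b) q.

Lemma strip_base_shiftR z t : z.1 < b -> t * a <= z.2 -> strip_base (shiftR t z) = z.
Proof.
move=> zb ta; rewrite /strip_base.
have -> : (shiftR t z).1 %/ b = t by rewrite /= addnC divnMDl // divn_small // addn0.
exact: shiftRK.
Qed.

Lemma low_shiftR_reaches_shiftL z p t s u :
  z.1 < b -> u * b <= p.1 -> t * a <= z.2 -> s * a <= p.2 ->
  shiftR t z = shiftR s p -> exists2 w, w <= t & shiftR w z = shiftL u p.
Proof.
case: z p => i j [i0 j0] /= ib ub ta sa [eq1 eq2].
have ust : u + s <= t.
  suff : (u + s) * b < t.+1 * b by rewrite ltn_pmul2r // ltnS.
  by rewrite mulnDl mulSn; lia.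
exists (t - (u + s)); first exact: leq_subr.
by rewrite /shiftR /shiftL /= !mulnBl !mulnDl; congr pair; nia.
Qed.

Variable n : nat.

Lemma in_Sk k p :
  (p \in Sk a b n k lam) = (p \in lam) && (a * p.1 + b * p.2 == k %[mod n]).
Proof. exact: in_fset_sep. Qed.

Lemma card_Sk r k : balanced a b n r lam -> k < n -> #|` Sk a b n k lam| = r.
Proof.
move=> bal kn; rewrite -(bal k kn); congr #|` _|; apply/fsetP => p.
by rewrite in_Sk in_fset_sep /color (modn_small kn).
Qed.

Lemma Sk_shiftR k t p : t * a <= p.2 -> shiftR t p \in lam ->
  p \in Sk a b n k lam -> shiftR t p \in Sk a b n k lam.
Proof. by move=> ta tl; rewrite !in_Sk weight_shiftR // tl => /andP[]. Qed.

Lemma Sk_shiftL k t p : t * b <= p.1 -> shiftL t p \in lam ->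
  p \in Sk a b n k lam -> shiftL t p \in Sk a b n k lam.
Proof. by move=> tb tl; rewrite !in_Sk weight_shiftL // tl => /andP[]. Qed.

Lemma Sk_lower k p q : a * b <= k -> p \in lam ->
  a * p.1 + b * p.2 + a * b = a * q.1 + b * q.2 ->
  q \in Sk a b n k lam -> p \in Sk a b n (k - a * b) lam.
Proof.
move=> abk pl pq; rewrite !in_Sk pl => /andP[_ qk] /=.
by rewrite -(eqn_modDr (a * b)) subnK // pq.
Qed.

Section ColorClass.
Variables (r k : nat).
Hypotheses (coprime_ab : coprime a b) (lam_partition : is_partition lam)
  (lam_balanced : balanced a b n r lam) (k_lt_n : k < n) (ab_le_k : a * b <= k)
  (k_repr : exists u v, k = r * a * b + a * u + b * v).

Local Notation S := (Sk a b n k lam).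

Lemma line_sub_of_right_ray i j :
  i < b -> a * i + b * j = k %[mod n] -> right_ray_in (i, j) ->
  forall x y, a * x + b * y = k -> (x, y) \in lam.
Proof.
move=> ib ijk /right_ray_inP ray x y xyk.
(* The box of the ray whose first coordinate is the least one >= x dominates (x, y). *)
have [t [d [db xd]]] := round_up_to_residue x ib.
have kd : k + a * d <= a * i + b * j.
  rewrite (modn_small k_lt_n) in ijk.
  case: (modn_eq_or_ge ijk) => [ij_eq | k_n_le]; last first.
    have : a * d < a * b by rewrite ltn_pmul2l.
    lia.
  have : b %| a * d.
    have eq : a * d + b * j = b * (t * a + y) by nia.
    by rewrite -(dvdn_addl _ (dvdn_mulr j (dvdnn b))) eq dvdn_mulr.
  rewrite Gauss_dvdr 1?coprime_sym // /dvdn modn_small // => /eqP d0.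
  by rewrite d0 muln0 addn0 ij_eq.
have tay : t * a + y <= j by rewrite -(leq_pmul2l b_gt0); nia.
apply: lam_partition (ray t _) _ _ => /=; lia.
Qed.

Lemma card_Sk_gt_of_line_sub :
  (forall x y, a * x + b * y = k -> (x, y) \in lam) -> r < #|` S|.
Proof.
move=> line_sub; case: k_repr => u [v k_eq].
pose point s := (u + s * b, v + (r - s) * a).
have point_inj : injective point.
  move=> s s' /(congr1 fst) /= e; apply/eqP.
  by rewrite -(eqn_pmul2r b_gt0) -(eqn_add2l u) e.
have : point @` [fset s in iota 0 r.+1] `<=` S.
  apply/fsubsetP => _ /imfsetP[s + ->]; rewrite in_fset mem_iota ltnS => /andP[_ sr].
  have point_k : a * (point s).1 + b * (point s).2 = k.
    by rewrite k_eq /= -[in RHS](subnKC sr); move: (r - s) => w; nia.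
  by rewrite in_Sk point_k eqxx andbT; apply: line_sub point_k.
move/fsubset_leq_card; rewrite card_imfset // card_fseq undup_id ?iota_uniq //.
by rewrite size_iota.
Qed.

Lemma low_not_right_ray p : p \in S -> p.1 < b -> ~~ right_ray_in p.
Proof.
case: p => i j; rewrite in_Sk => /andP[_ /eqP ijk] /= ib; apply/negP => ray.
have := card_Sk_gt_of_line_sub (line_sub_of_right_ray ib ijk ray).
by rewrite (card_Sk lam_balanced k_lt_n) ltnn.
Qed.

Definition low_part := [fset p in S | p.1 < b].
Definition right_ends := [fset p in S | (a <= p.2) && (shiftR 1 p \notin lam)].

Lemma right_end_of p : p \in S -> ~~ right_ray_in p ->
  exists s, [/\ s * a <= p.2, shiftR s p \in right_ends &
                forall w, w <= s -> shiftR w p \in lam].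
Proof.
move=> pS nray; have pl : p \in lam by move: pS; rewrite in_Sk => /andP[].
have [s [sa sn s_in]] := right_ray_exit pl nray.
have sa' : s * a <= p.2 by apply: leq_trans sa; rewrite leq_mul2r leqnSn orbT.
exists s; split=> //; rewrite in_fset_sep Sk_shiftR ?s_in //= shiftR_add addn1 sn.
by rewrite andbT /shiftR /= leq_subRL // addnC -mulSn.
Qed.

Lemma card_right_ends_le : #|` right_ends| <= #|` low_part|.
Proof.
pose high := [fset p in S | b <= p.1].
have card_S : #|` low_part| + #|` high| = r.
  rewrite -(card_Sk lam_balanced k_lt_n) -(cardfsID low_part S).
  have -> : S `\` low_part = high.
    apply/fsetP => p; rewrite in_fsetD !(in_fset_sep S).
    by case: (p \in S); rewrite //= andbT -leqNgt.
  by rewrite (fsetIidPr _) //; apply/fsubsetP => p; rewrite in_fset_sep => /andP[].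
pose cut_left (p : nat * nat) := (p.1 - b, p.2).
pose cut_down (p : nat * nat) := (p.1, p.2 - a).
have sub : cut_left @` high `|` cut_down @` right_ends `<=` Sk a b n (k - a * b) lam.
  apply/fsubsetP => _ /fsetUP[] /imfsetP[[x y] + ->];
    rewrite in_fset_sep => /andP[xyS] /= xy_cond;
    apply: (Sk_lower ab_le_k _ _ xyS); rewrite /cut_left /cut_down /=.
  - have := xyS; rewrite in_Sk => /andP[xyl _].
    by apply: lam_partition xyl _ _; lia.
  - by rewrite mulnBr; nia.
  - case/andP: xy_cond => ay _; have := xyS; rewrite in_Sk => /andP[xyl _].
    by apply: lam_partition xyl _ _; lia.
  - by case/andP: xy_cond => ay _; rewrite mulnBr; nia.
have disj : cut_left @` high `&` cut_down @` right_ends = fset0.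
  apply/fsetP => q; rewrite in_fsetI in_fset0; apply/negP => /andP[].
  move=> /imfsetP[[x y] + ->] /imfsetP[[x' y'] + [ex ey]] /=.
  rewrite !in_fset_sep /= => /andP[/andP[xyl _] bx] /andP[_ /andP[ay' nxy]].
  by move: nxy; rewrite /shiftR /= !mul1n -ex -ey subnK // xyl.
have := fsubset_leq_card sub; rewrite cardfsU disj cardfs0 subn0.
have /eqP -> : #|` cut_left @` high| == #|` high|.
  apply/card_in_imfsetP => -[x y] [x' y']; rewrite !in_fset_sep /=.
  by move=> /andP[_ bx] /andP[_ bx'] [ex ->]; congr pair; lia.
have /eqP -> : #|` cut_down @` right_ends| == #|` right_ends|.
  apply/card_in_imfsetP => -[x y] [x' y']; rewrite !in_fset_sep /=.
  by move=> /andP[_ /andP[ay _]] /andP[_ /andP[ay' _]] [-> ey]; congr pair; lia.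
rewrite (card_Sk lam_balanced) //; first lia.
by apply: leq_ltn_trans k_lt_n; rewrite leq_subr.
Qed.

Lemma card_low_part_lt p : p \in S -> ~~ left_ray_in p -> ~~ right_ray_in p ->
  #|` low_part| < #|` right_ends|.
Proof.
move=> pS /left_ray_inPn[u ub un] nray.
have [s [sa end_s _]] := right_end_of pS nray.
have sub : low_part `<=` strip_base @` (right_ends `\ shiftR s p).
  apply/fsubsetP => z; rewrite in_fset_sep => /andP[zS zb].
  have [t [ta end_t t_in]] := right_end_of zS (low_not_right_ray zS zb).
  apply/imfsetP; exists (shiftR t z); last by rewrite strip_base_shiftR.
  rewrite in_fsetD1 end_t andbT; apply: contra un => /eqP ends_eq.
  by have [w wt <-] := low_shiftR_reaches_shiftL zb ub ta sa ends_eq; apply: t_in.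
rewrite (cardfsD1 (shiftR s p) right_ends) end_s add1n ltnS.
by apply: leq_trans (fsubset_leq_card sub) _; apply: leq_imfset_card.
Qed.

Lemma Sk_left_or_right_ray p : p \in S -> left_ray_in p || right_ray_in p.
Proof.
move=> pS; apply/negPn/negP; rewrite negb_or => /andP[nleft nright].
by have := card_low_part_lt pS nleft nright; rewrite ltnNge card_right_ends_le.
Qed.

Lemma Sk_ray_decomposition : exists A B : {fset (nat * nat)},
  [/\ A `&` B = fset0, A `|` B = S,
      (forall i j, (i, j) \in A -> i < b \/ (i - b, j + a) \in A) &
      (forall i j, (i, j) \in B -> j < a \/ (i + b, j - a) \in B)].
Proof.
exists [fset p in S | left_ray_in p], [fset p in S | right_ray_in p && ~~ left_ray_in p].
split.
- apply/fsetP => p; rewrite in_fsetI !(in_fset_sep S) in_fset0.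
  by case: (left_ray_in p); rewrite ?andbF.
- apply/fsetP => p; rewrite in_fsetU !(in_fset_sep S).
  have := @Sk_left_or_right_ray p; case: (p \in S) => //= /(_ isT).
  by case: (left_ray_in p); case: (right_ray_in p).
- move=> i j; rewrite (in_fset_sep S) => /andP[ijS left].
  case: (ltnP i b) => ib; [by left | right].
  have -> : (i - b, j + a) = shiftL 1 (i, j) by rewrite /shiftL !mul1n.
  rewrite (in_fset_sep S) left_ray_in_shiftL // andbT Sk_shiftL ?mul1n //.
  by apply: (left_ray_inP _ left); rewrite mul1n.
- move=> i j; rewrite (in_fset_sep S) => /and3P[ijS right nleft].
  case: (ltnP j a) => ja; [by left | right].
  have -> : (i + b, j - a) = shiftR 1 (i, j) by rewrite /shiftR !mul1n.
  rewrite (in_fset_sep S) right_ray_in_shiftR // (contra (left_ray_in_shiftR _) nleft) //.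
  rewrite andbT Sk_shiftR ?mul1n //.
  by apply: (right_ray_inP _ right); rewrite mul1n.
Qed.

End ColorClass.
End Diagram.

Theorem lemma4p1 (a b r n : nat) (lam : {fset (nat * nat)}) (k : nat) :
  0 < a -> 0 < b -> coprime a b -> 1 <= r -> r * a * b < n ->
  is_partition lam -> #|` lam| = r * n -> balanced a b n r lam ->
  r * a * b <= k -> k <= n - 1 ->
  (exists u v : nat, k = r * a * b + a * u + b * v) ->
  exists A B : {fset (nat * nat)},
    [/\ A `&` B = fset0, A `|` B = Sk a b n k lam,
        (forall i j, (i, j) \in A -> i < b \/ (i - b, j + a) \in A) &
        (forall i j, (i, j) \in B -> j < a \/ (i + b, j - a) \in B)].
Proof.
move=> a_gt0 b_gt0 coprime_ab r_gt0 rab_lt_n lam_partition _ lam_balanced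
  rab_le_k k_le k_repr.
have k_lt_n : k < n by lia.
have ab_le_k : a * b <= k by nia.
exact (Sk_ray_decomposition a_gt0 b_gt0 coprime_ab lam_partition lam_balanced
  k_lt_n ab_le_k k_repr).
Qed.
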